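(* Every RiFle assignment game (with arbitrary nonnegative real data $(\beta_{ij},\gamma_{ij})$ and an arbitrary assignment of each agent as rigid or flexible) has at least one stable outcome; i.e. the set of stable outcomes is nonempty.
   Context: A RiFle assignment game consists of two disjoint sets of agents $P=\{p_1,\dots,p_n\}$ and $Q=\{q_1,\dots,q_n\}$, a pair of nonnegative real numbers $(\beta_{ij},\gamma_{ij})$ for every pair $(p_i,q_j)\in P\times Q$ (write $\alpha_{ij}=\beta_{ij}+\gamma_{ij}$), and a designation of every agent as either rigid or flexible. Let $\mathcal R$ be the set of pairs $(p_i,q_j)$ in which at least one of $p_i,q_j$ is rigid, and $\mathcal F$ the set of pairs in which both are flexible. An outcome $(\bar u,\bar v;\mu)$ consists of a matching $\mu$ between $P$ and $Q$ (a set of disjoint pairs $(p_i,q_j)$; write $p_i\stackrel{\mu}{\longleftrightarrow} q_j$) and payoff vectors $\bar u=(u_1,\dots,u_n)$, $\bar v=(v_1,\dots,v_n)\in\mathbb R^n$. It is feasible if: (1) $u_i\ge 0$, $v_j\ge 0$ for all $i,j$; (2) if a rigid agent $p_i$ is matched to $q_j$ then $u_i=\beta_{ij}$, and if moreover $q_j$ is flexible then $v_j\ge\gamma_{ij}$; symmetrically, if a rigid agent $q_j$ is matched to $p_i$ then $v_j=\gamma_{ij}$, and if moreover $p_i$ is flexible then $u_i\ge\beta_{ij}$; (3) $\sum_i u_i+\sum_j v_j=\sum_{p_i\stackrel{\mu}{\longleftrightarrow} q_j}\alpha_{ij}$. It is stable if it is feasible and $u_i+v_j\ge\alpha_{ij}$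 for all $(p_i,q_j)\in\mathcal F$, and ($u_i\ge\beta_{ij}$ or $v_j\ge\gamma_{ij}$) for all $(p_i,q_j)\in\mathcal R$. *)

From mathcomp Require Import all_boot all_order all_algebra.
From mathcomp Require Import reals.
Set Implicit Arguments. Unset Strict Implicit. Unset Printing Implicit Defensive.
Import Order.TTheory GRing.Theory Num.Theory.
Local Open Scope ring_scope.

Record rifle_game (R : realType) (n : nat) := RiFle {
  beta  : 'I_n -> 'I_n -> R;
  gamma : 'I_n -> 'I_n -> R;
  rigidP : 'I_n -> bool;
  rigidQ : 'I_n -> bool
}.

Definition nonneg_data (R : realType) (n : nat) (G : rifle_game R n) : Prop :=
  forall i j, 0 <= beta G i j /\ 0 <= gamma G i j.

Definition alpha (R : realType) (n : nat) (G : rifle_game R n) i j : R :=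
  beta G i j + gamma G i j.

(* A matching: mu i = Some j means p_i <-> q_j, mu i = None means p_i unmatched.
   Disjointness of pairs: mu is injective on its matched values. *)
Definition is_matching (n : nat) (mu : 'I_n -> option 'I_n) : Prop :=
  forall i i' j, mu i = Some j -> mu i' = Some j -> i = i'.

Definition in_calR (R : realType) (n : nat) (G : rifle_game R n) i j : bool :=
  rigidP G i || rigidQ G j.

Definition feasible (R : realType) (n : nat) (G : rifle_game R n)
  (u v : 'I_n -> R) (mu : 'I_n -> option 'I_n) : Prop :=
  is_matching mu /\
  (forall i, 0 <= u i) /\ (forall j, 0 <= v j) /\
  (forall i j, mu i = Some j -> rigidP G i ->
     u i = beta G i j /\ (~~ rigidQ G j -> gamma G i j <= v j)) /\
  (forall i j, mu i = Some j -> rigidQ G j ->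
     v j = gamma G i j /\ (~~ rigidP G i -> beta G i j <= u i)) /\
  (\sum_(i < n) u i + \sum_(j < n) v j =
     \sum_(i < n) (match mu i with Some j => alpha G i j | None => 0 end)).

Definition stable (R : realType) (n : nat) (G : rifle_game R n)
  (u v : 'I_n -> R) (mu : 'I_n -> option 'I_n) : Prop :=
  feasible G u v mu /\
  (forall i j, ~~ in_calR G i j -> alpha G i j <= u i + v j) /\
  (forall i j, in_calR G i j -> beta G i j <= u i \/ gamma G i j <= v j).

(* For every e > 0 deferred acceptance on a finite set of contracts yields an
   e-stable outcome: a rigid pair (i, j) is a contract paying beta_ij and
   gamma_ij, a flexible pair offers the contracts paying k e and alpha_ij - k e,
   and only flexible pairs can still block, by at most e.  Fixing the matching
   and, for each rigid pair, which of its members is content, the e-stability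
   conditions become difference constraints x_a - x_b >= c - k e on the
   potentials x_0 = 0, x_(i+1) = u_i, x_(n+j+1) = - v_j.  There are finitely
   many such patterns, so one of them is solvable for every e > 0, and
   Fourier-Motzkin elimination shows that a system of difference constraints
   solvable for every e > 0 is solvable for e = 0; that solution is a stable
   outcome. *)

From HB Require Import structures.
From mathcomp Require Import all_boot all_order all_algebra.
From mathcomp Require Import reals.
From mathcomp Require Import lra.
From Stdlib Require Import Classical.
Set Implicit Arguments.
Unset Strict Implicit.
Unset Printing Implicit Defensive.

Import Order.TTheory GRing.Theory Num.Theory.
Local Open Scope ring_scope.

Section DifferenceConstraints.
Variable R : realFieldType.

Record dcstr := DCstr { dc_pos : nat; dc_neg : nat; dc_bound : R; dc_slack : nat }.

Definition dc_tuple (c : dcstr) := (dc_pos c, dc_neg c, dc_bound c, dc_slack c).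
Definition tuple_dc (t : nat * nat * R * nat) := DCstr t.1.1.1 t.1.1.2 t.1.2 t.2.
Lemma dc_tupleK : cancel dc_tuple tuple_dc. Proof. by case. Qed.
HB.instance Definition _ := Equality.copy dcstr (can_type dc_tupleK).

Definition dc_holds (e : R) (x : nat -> R) (c : dcstr) : bool :=
  dc_bound c - (dc_slack c)%:R * e <= x (dc_pos c) - x (dc_neg c).

Definition dc_vars_below (N : nat) (c : dcstr) : bool :=
  (dc_pos c < N)%N && (dc_neg c < N)%N.

Lemma dc_holds_mono e e' x c : e <= e' -> dc_holds e x c -> dc_holds e' x c.
Proof.
rewrite /dc_holds => le_ee'; apply: le_trans.
by rewrite lerD2l lerN2 ler_wpM2l.
Qed.

Lemma le0_of_forall_le_natmul (c : R) k :
  (forall e, 0 < e -> c <= k%:R * e) -> c <= 0.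
Proof.
move=> le_c; rewrite leNgt; apply/negP => c_gt0.
have := le_c (c / k.+1%:R) (divr_gt0 c_gt0 (ltr0Sn _ _)).
by rewrite mulrA ler_pdivlMr ?ltr0Sn // mulrSr mulrDr mulr1 mulrC gerDl leNgt c_gt0.
Qed.

Lemma exists_between (L U : seq R) :
  {in L & U, forall l u, l <= u} ->
  exists t, {in L, forall l, l <= t} /\ {in U, forall u, t <= u}.
Proof.
elim: L => [|l L IH] le_LU.
  elim: U {le_LU} => [|u U [t [_ t_U]]]; first by exists 0.
  exists (Num.min u t); split=> // w; rewrite inE => /predU1P[->|wU].
    by rewrite ge_min lexx.
  by rewrite ge_min t_U ?orbT.
have [t [L_t t_U]] : exists t, {in L, forall l, l <= t} /\ {in U, forall u, t <= u}.
  by apply: IH => l' u l'L uU; apply: le_LU; rewrite ?inE ?l'L ?orbT.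
exists (Num.max l t); split=> [w|u uU].
  by rewrite inE le_max => /predU1P[->|/L_t ->]; rewrite ?lexx ?orbT.
by rewrite ge_max t_U // andbT le_LU ?mem_head.
Qed.

Definition dc_chain (l u : dcstr) : dcstr :=
  DCstr (dc_pos u) (dc_neg l) (dc_bound l + dc_bound u) (dc_slack l + dc_slack u).

Lemma dc_chain_holds e x l u : dc_pos l = dc_neg u ->
  dc_holds e x l -> dc_holds e x u -> dc_holds e x (dc_chain l u).
Proof.
rewrite /dc_holds /= natrD mulrDl => lu hl hu.
by rewrite lu in hl; lra.
Qed.

Section Elimination.
Variables (N : nat) (S : seq dcstr).

Definition dc_lower := [seq c <- S | (dc_pos c == N) && (dc_neg c != N)].
Definition dc_upper := [seq c <- S | (dc_pos c != N) && (dc_neg c == N)].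
Definition dc_eliminate := [seq c <- S | (dc_pos c != N) && (dc_neg c != N)] ++
  [seq dc_chain l u | l <- dc_lower, u <- dc_upper].

Lemma dc_eliminate_holds e x : all (dc_holds e x) S -> all (dc_holds e x) dc_eliminate.
Proof.
move/allP=> hS; apply/allP => c; rewrite mem_cat => /orP[|/allpairsP[[l u] [/= lL uU ->]]].
  by rewrite mem_filter => /andP[_ /hS].
move: lL uU; rewrite !mem_filter => /andP[/andP[/eqP lN _] lS] /andP[/andP[_ /eqP uN] uS].
by apply: dc_chain_holds; rewrite ?lN ?uN ?hS.
Qed.

Lemma dc_eliminate_below : all (dc_vars_below N.+1) S -> all (dc_vars_below N) dc_eliminate.
Proof.
have ltN a : (a < N.+1)%N -> a != N -> (a < N)%N.
  by rewrite ltnS leq_eqVlt => /predU1P[->|]; rewrite ?eqxx.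
move/allP=> hS; apply/allP => c; rewrite mem_cat => /orP[|/allpairsP[[l u] [/= lL uU ->]]].
  rewrite mem_filter => /andP[/andP[posN negN] /hS /andP[pos_lt neg_lt]].
  by rewrite /dc_vars_below !ltN.
move: lL uU; rewrite !mem_filter.
move=> /andP[/andP[_ lN] /hS /andP[_ l_lt]] /andP[/andP[uN _] /hS /andP[u_lt _]].
by rewrite /dc_vars_below /= !ltN.
Qed.

Lemma dc_eliminate_lift x :
  (forall e, 0 < e -> exists y, all (dc_holds e y) S) ->
  all (dc_holds 0 x) dc_eliminate -> exists y, all (dc_holds 0 y) S.
Proof.
move=> feasS; rewrite all_cat => /andP[/allP keep /all_allpairsP chain].
have [t [lower_t t_upper]] : exists t,
    {in [seq x (dc_neg l) + dc_bound l | l <- dc_lower], forall a, a <= t} /\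
    {in [seq x (dc_pos u) - dc_bound u | u <- dc_upper], forall b, t <= b}.
  apply: exists_between => _ _ /mapP[l lL ->] /mapP[u uU ->].
  by have := chain l u lL uU; rewrite /dc_holds /= mulr0 subr0; lra.
exists (fun a => if a == N then t else x a); apply/allP => c cS.
rewrite /dc_holds mulr0 subr0.
case: (eqVneq (dc_pos c) N) => posN; case: (eqVneq (dc_neg c) N) => negN.
- rewrite subrr; apply: (le0_of_forall_le_natmul (k := dc_slack c)) => e /feasS [y /allP/(_ c cS)].
  by rewrite /dc_holds posN negN subrr subr_le0.
- have cL : c \in dc_lower by rewrite mem_filter posN eqxx negN.
  by have := lower_t _ (map_f _ cL); lra.
- have cU : c \in dc_upper by rewrite mem_filter posN negN eqxx.
  by have := t_upper _ (map_f _ cU); lra.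
- have := keep c; rewrite mem_filter posN negN cS => /(_ isT).
  by rewrite /dc_holds mulr0 subr0.
Qed.

End Elimination.

Lemma dc_solvable_limit N S : all (dc_vars_below N) S ->
  (forall e, 0 < e -> exists x, all (dc_holds e x) S) ->
  exists x, all (dc_holds 0 x) S.
Proof.
elim: N S => [|N IH] S below feasS.
  by case: S below feasS => [|c S /andP[/andP[]]] //; exists (fun=> 0).
have feas_elim e : 0 < e -> exists y, all (dc_holds e y) (dc_eliminate N S).
  by move=> /feasS[y hy]; exists y; apply: dc_eliminate_holds.
have [x hx] := IH _ (dc_eliminate_below below) feas_elim.
exact: dc_eliminate_lift hx.
Qed.

End DifferenceConstraints.

Lemma exists_uniform_witness (R : realDomainType) (X : finType) (P : R -> X -> Prop) :
  (forall e e' x, e <= e' -> P e x -> P e' x) ->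
  (forall e, 0 < e -> exists x, P e x) -> exists x, forall e, 0 < e -> P e x.
Proof.
move=> P_mono P_ex; apply: NNPP => no_uniform.
have fails x : exists2 e, 0 < e & ~ P e x.
  apply: NNPP => all_hold; apply: no_uniform; exists x => e e_gt0.
  by apply: NNPP => not_P; apply: all_hold; exists e.
have [e e_gt0 fail_e] : exists2 e, 0 < e & forall x, x \in enum X -> ~ P e x.
  elim: (enum X) => [|x s [e e_gt0 fail_s]]; first by exists 1.
  have [ex ex_gt0 fail_x] := fails x.
  exists (Num.min e ex); first by rewrite lt_min e_gt0.
  move=> y; rewrite inE => /predU1P[->|ys] Py.
    by apply: fail_x; apply: P_mono Py; rewrite ge_min lexx orbT.
  by apply: (fail_s y ys); apply: P_mono Py; rewrite ge_min lexx.
have [x Px] := P_ex e e_gt0.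
by apply: fail_e Px; rewrite mem_enum.
Qed.

Lemma exists_rank_key (R : realDomainType) (C : finType) (f : C -> R) :
  exists2 k : C -> nat, injective k & forall c c', (k c <= k c')%N -> f c <= f c'.
Proof.
pose below c := #|[set a | f a < f c]|.
exists (fun c => below c * #|C| + enum_rank c)%N => [c c'|c c'].
  move/(congr1 (modn^~ #|C|)); rewrite !modnMDl !modn_small ?ltn_ord //.
  by move/val_inj/enum_rank_inj.
apply: contraTT; rewrite -ltNge -ltnNge => lt_c'c.
have lt_below : (below c' < below c)%N.
  apply: proper_card; apply/properP; split.
    by apply/subsetP => a; rewrite !inE => /lt_trans; apply.
  by exists c'; rewrite !inE ?lt_c'c ?ltxx.
apply: leq_trans (leq_addr _ _); apply: leq_trans (leq_mul lt_below (leqnn _)).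
by rewrite mulSn addnC ltn_add2r ltn_ord.
Qed.

Section DeferredAcceptance.
Variables (C P Q : finType) (pc : C -> P) (qc : C -> Q) (kp kq : C -> nat).
Variable V : {set C}.
Hypotheses (kp_inj : injective kp) (kq_inj : injective kq).

Definition stable_contracts (M : {set C}) :=
  [/\ M \subset V, {in M &, injective pc}, {in M &, injective qc} &
      forall c, c \in V ->
        (exists2 b, b \in M & pc b = pc c /\ (kp c <= kp b)%N) \/
        (exists2 b, b \in M & qc b = qc c /\ (kq c <= kq b)%N)].

(* A is the set of contracts not yet rejected: each P-agent proposes its
   favourite contract in A, and a Q-agent receiving two proposals rejects the
   one it ranks lower. *)
Definition p_favourite (A : {set C}) (c : C) : bool :=
  (c \in A) && [forall b in A, (pc b == pc c) ==> (kp b <= kp c)%N].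

Definition rejected_outside (A : {set C}) : Prop :=
  forall c, c \in V -> c \notin A ->
    exists2 b, p_favourite A b & qc b = qc c /\ (kq c < kq b)%N.

Definition clash (A : {set C}) (c1 c2 : C) : bool :=
  [&& p_favourite A c1, p_favourite A c2, qc c1 == qc c2 & (kq c1 < kq c2)%N].

Lemma p_favourite_subset (A B : {set C}) b :
  B \subset A -> b \in B -> p_favourite A b -> p_favourite B b.
Proof.
move=> sBA bB /andP[_ /forall_inP b_best]; rewrite /p_favourite bB.
by apply/forall_inP => c /(subsetP sBA); apply: b_best.
Qed.

Lemma exists_p_favourite (A : {set C}) c : c \in A ->
  exists2 b, p_favourite A b & pc b = pc c /\ (kp c <= kp b)%N.
Proof.
move=> cA; have cAc : [pred b in A | pc b == pc c] c by rewrite /= cA eqxx.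
case: (arg_maxnP kp cAc) => b /andP[bA /eqP pcb] b_max.
exists b; last by split=> //; apply: b_max.
rewrite /p_favourite bA; apply/forall_inP => b' b'A; apply/implyP => /eqP pcb'.
by apply: b_max; apply/andP; rewrite pcb' pcb.
Qed.

Lemma clash_free_stable (A : {set C}) :
  A \subset V -> rejected_outside A -> (forall c1 c2, ~~ clash A c1 c2) ->
  stable_contracts [set c | p_favourite A c].
Proof.
move=> sAV rejA no_clash; split.
- by apply/subsetP => c; rewrite inE => /andP[/(subsetP sAV) cV _].
- move=> c1 c2; rewrite !inE => /andP[c1A /forall_inP best1] /andP[c2A /forall_inP best2] pc12.
  apply: kp_inj; apply/eqP; rewrite eqn_leq.
  by rewrite (implyP (best2 _ c1A)) ?(implyP (best1 _ c2A)) ?pc12 ?eqxx.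
- move=> c1 c2; rewrite !inE => fav1 fav2 qc12; apply: kq_inj.
  case: (ltngtP (kq c1) (kq c2)) => // lt_kq.
    by have := no_clash c1 c2; rewrite /clash fav1 fav2 qc12 eqxx lt_kq.
  by have := no_clash c2 c1; rewrite /clash fav1 fav2 qc12 eqxx lt_kq.
move=> c cV; case: (boolP (c \in A)) => [cA | /(rejA c cV) [b fav_b [qcb lt_kq]]].
  by have [b fav_b [pcb le_kp]] := exists_p_favourite cA; left; exists b; rewrite ?inE.
by right; exists b; rewrite ?inE // qcb ltnW.
Qed.

Lemma clash_reject (A : {set C}) c1 c2 :
  rejected_outside A -> clash A c1 c2 -> rejected_outside (A :\ c1).
Proof.
move=> rejA /and4P[fav1 fav2 /eqP qc12 lt_kq].
have c2A' : c2 \in A :\ c1.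
  by rewrite !inE (andP fav2).1 andbT; apply: contraTneq lt_kq => ->; rewrite ltnn.
have fav2' := p_favourite_subset (subsetDl A [set c1]) c2A' fav2.
move=> c cV; rewrite !inE negb_and negbK => /orP[/eqP->|cA]; first by exists c2.
have [b fav_b [qcb lt_cb]] := rejA c cV cA.
case: (eqVneq b c1) => [b_c1|b_c1].
  by subst b; exists c2 => //; split; [rewrite -qc12 | apply: ltn_trans lt_kq].
have bA' : b \in A :\ c1 by rewrite !inE b_c1 (andP fav_b).1.
by exists b; first exact: p_favourite_subset (subsetDl A [set c1]) bA' fav_b.
Qed.

Lemma stable_contracts_exist : exists M, stable_contracts M.
Proof.
suff: forall m (A : {set C}), (#|A| <= m)%N -> A \subset V -> rejected_outside A ->
    exists M, stable_contracts M.
  by move/(_ _ V (leqnn _) (subxx _)); apply=> c ->.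
elim=> [|m IH] A szA sAV rejA.
  exists [set c | p_favourite A c]; apply: clash_free_stable => // c1 c2.
  apply/negP => /and4P[/andP[c1A _] _ _ _].
  by move: szA; rewrite leqn0 cards_eq0 => /eqP A0; rewrite A0 inE in c1A.
case: (pickP (fun c12 => clash A c12.1 c12.2)) => [[c1 c2] /= clash12 | no_clash].
  have c1A : c1 \in A by case/and4P: clash12 => /andP[].
  apply: (IH (A :\ c1)); last exact: clash_reject clash12.
    by rewrite -ltnS (leq_trans _ szA) // (cardsD1 c1 A) c1A.
  exact: subset_trans (subsetDl _ _) sAV.
exists [set c | p_favourite A c]; apply: clash_free_stable => // c1 c2.
by rewrite (no_clash (c1, c2)).
Qed.

End DeferredAcceptance.

Lemma sum_matching (V : nmodType) n (mu : 'I_n -> option 'I_n) (u v : 'I_n -> V)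
    (a : 'I_n -> 'I_n -> V) :
  is_matching mu -> (forall i, mu i = None -> u i = 0) ->
  (forall j, (forall i, mu i != Some j) -> v j = 0) ->
  (forall i j, mu i = Some j -> u i + v j = a i j) ->
  \sum_(i < n) u i + \sum_(j < n) v j =
  \sum_(i < n) (if mu i is Some j then a i j else 0).
Proof.
move=> mu_match u0 v0 uva.
have -> : \sum_(j < n) v j = \sum_(i < n) (if mu i is Some j then v j else 0).
  transitivity (\sum_(j < n) \sum_(i < n) (if mu i == Some j then v j else 0)).
    apply: eq_bigr => j _; case: (pickP (fun i => mu i == Some j)) => [i /eqP mu_i|unmatched].
      rewrite (bigD1 i) ?mu_i ?eqxx //= big1 ?addr0 // => i' i'_i.
      by case: eqP => // /mu_match/(_ mu_i) i'i; rewrite i'i eqxx in i'_i.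
    by rewrite v0 ?big1 // => i; rewrite unmatched.
  rewrite exchange_big; apply: eq_bigr => i _; case: (mu i) => [j|]; last by rewrite big1.
  rewrite (bigD1 j) //= eqxx big1 ?addr0 // => j' j'_j.
  by case: eqP => // -[j'j]; rewrite j'j eqxx in j'_j.
rewrite -big_split; apply: eq_bigr => i _ /=.
by case mu_i: (mu i) => [j|]; [apply: uva | rewrite u0 ?addr0].
Qed.

Section Game.
Variables (R : realType) (n : nat) (G : rifle_game R n).

Record eps_stable (e : R) (mu : 'I_n -> option 'I_n) (u v : 'I_n -> R) : Prop := EpsStable {
  es_matching : is_matching mu;
  es_u_ge0 : forall i, 0 <= u i;
  es_v_ge0 : forall j, 0 <= v j;
  es_u_unmatched : forall i, mu i = None -> u i = 0;
  es_v_unmatched : forall j, (forall i, mu i != Some j) -> v j = 0;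
  es_rigid_pair : forall i j, mu i = Some j -> in_calR G i j ->
    u i = beta G i j /\ v j = gamma G i j;
  es_flexible_pair : forall i j, mu i = Some j -> ~~ in_calR G i j ->
    u i + v j = alpha G i j;
  es_rigid_block : forall i j, in_calR G i j -> beta G i j <= u i \/ gamma G i j <= v j;
  es_flexible_block : forall i j, ~~ in_calR G i j -> alpha G i j - e <= u i + v j
}.

Lemma eps_stable0_stable mu u v : eps_stable 0 mu u v -> stable G u v mu.
Proof.
case=> mu_match u0 v0 u_unm v_unm rigid flex rigid_block flex_block.
have calR_P i j : rigidP G i -> in_calR G i j by rewrite /in_calR => ->.
have calR_Q i j : rigidQ G j -> in_calR G i j by rewrite /in_calR orbC => ->.
split; last by split=> [i j /flex_block|//]; rewrite subr0.
do 3 split=> //; split; [|split].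
- move=> i j mu_ij /(calR_P i j) /(rigid _ _ mu_ij) [-> ->].
  by split=> // _; apply: lexx.
- move=> i j mu_ij /(calR_Q i j) /(rigid _ _ mu_ij) [-> ->].
  by split=> // _; apply: lexx.
apply: sum_matching => // i j mu_ij; case: (boolP (in_calR G i j)) => [rig | /(flex _ _ mu_ij) //].
by have [-> ->] := rigid _ _ mu_ij rig.
Qed.

Section EpsStableOutcome.
Variable e : R.
Hypotheses (G_ge0 : nonneg_data G) (e_gt0 : 0 < e).

Let K := (\max_(p : 'I_n * 'I_n) Num.truncn (alpha G p.1 p.2 / e)).+1.
Local Notation contract := ('I_n * 'I_n * 'I_K)%type.

Definition price (c : contract) : R := (c.2 : nat)%:R * e.

Definition p_share (c : contract) : R :=
  if in_calR G c.1.1 c.1.2 then beta G c.1.1 c.1.2 else price c.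

Definition q_share (c : contract) : R :=
  if in_calR G c.1.1 c.1.2 then gamma G c.1.1 c.1.2 else alpha G c.1.1 c.1.2 - price c.

Definition admissible (c : contract) : bool :=
  in_calR G c.1.1 c.1.2 || (price c <= alpha G c.1.1 c.1.2).

Lemma p_share_ge0 c : 0 <= p_share c.
Proof.
rewrite /p_share; case: ifP => _; first exact: (G_ge0 _ _).1.
exact: mulr_ge0 (ler0n _ _) (ltW e_gt0).
Qed.

Lemma q_share_ge0 c : admissible c -> 0 <= q_share c.
Proof.
by rewrite /admissible /q_share; case: ifP => _ /=; [case: (G_ge0 c.1.1 c.1.2) | rewrite subr_ge0].
Qed.

Lemma p_share_add_q_share c : p_share c + q_share c = alpha G c.1.1 c.1.2.
Proof. by rewrite /p_share /q_share; case: ifP => _; rewrite // addrC subrK. Qed.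

Lemma exists_flexible_contract i j (k : nat) : k%:R * e <= alpha G i j ->
  exists c : contract, [/\ c.1 = (i, j), price c = k%:R * e & admissible c].
Proof.
move=> le_ke_alpha.
have alpha_ge0 : 0 <= alpha G i j.
  exact: le_trans (mulr_ge0 (ler0n _ _) (ltW e_gt0)) le_ke_alpha.
have k_lt_K : (k < K)%N.
  rewrite ltnS (leq_trans _ (leq_bigmax (i, j))) //=.
  by rewrite truncn_ge_nat ?ler_pdivlMr // mul0r.
by exists ((i, j), Ordinal k_lt_K); rewrite /admissible /price /= le_ke_alpha orbT.
Qed.

Section FromStableContracts.
Variables (kp kq : contract -> nat) (M : {set contract}).
Hypothesis kp_p_share : forall c c', (kp c <= kp c')%N -> p_share c <= p_share c'.
Hypothesis kq_q_share : forall c c', (kq c <= kq c')%N -> q_share c <= q_share c'.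
Hypothesis M_admissible : M \subset [set c | admissible c].
Hypothesis M_p_inj : {in M &, injective (fun c : contract => c.1.1)}.
Hypothesis M_q_inj : {in M &, injective (fun c : contract => c.1.2)}.
Hypothesis M_blocks : forall c, c \in [set c | admissible c] ->
  (exists2 b, b \in M & b.1.1 = c.1.1 /\ (kp c <= kp b)%N) \/
  (exists2 b, b \in M & b.1.2 = c.1.2 /\ (kq c <= kq b)%N).

Definition p_contract i := [pick c in M | c.1.1 == i].
Definition q_contract j := [pick c in M | c.1.2 == j].

Definition mu_M : {ffun 'I_n -> option 'I_n} :=
  [ffun i => omap (fun c : contract => c.1.2) (p_contract i)].
Definition u_M i := oapp p_share 0 (p_contract i).
Definition v_M j := oapp q_share 0 (q_contract j).

Lemma p_contract_in c : c \in M -> p_contract c.1.1 = Some c.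
Proof.
move=> cM; rewrite /p_contract; case: pickP => [c' /andP[c'M /eqP same]|/(_ c)].
  by rewrite (M_p_inj c'M cM same).
by rewrite cM eqxx.
Qed.

Lemma q_contract_in c : c \in M -> q_contract c.1.2 = Some c.
Proof.
move=> cM; rewrite /q_contract; case: pickP => [c' /andP[c'M /eqP same]|/(_ c)].
  by rewrite (M_q_inj c'M cM same).
by rewrite cM eqxx.
Qed.

Lemma p_contractP i c : p_contract i = Some c -> c \in M /\ c.1.1 = i.
Proof. by rewrite /p_contract; case: pickP => // c' /andP[c'M /eqP <-] [<-]. Qed.

Lemma q_contractP j c : q_contract j = Some c -> c \in M /\ c.1.2 = j.
Proof. by rewrite /q_contract; case: pickP => // c' /andP[c'M /eqP <-] [<-]. Qed.

Lemma mu_MP i j : mu_M i = Some j -> exists2 c, c \in M & c.1 = (i, j).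
Proof.
rewrite ffunE; case p_i: (p_contract i) => [c|] //= [<-].
have [cM <-] := p_contractP p_i.
by exists c; last by case: c {p_i cM} => [[]].
Qed.

Lemma u_M_ge0 i : 0 <= u_M i.
Proof. by rewrite /u_M; case: p_contract => //= c; apply: p_share_ge0. Qed.

Lemma v_M_ge0 j : 0 <= v_M j.
Proof.
rewrite /v_M; case qj: (q_contract j) => [c|] //=; apply: q_share_ge0.
by have [/(subsetP M_admissible)] := q_contractP qj; rewrite inE.
Qed.

Lemma admissible_blocked c : admissible c ->
  p_share c <= u_M c.1.1 \/ q_share c <= v_M c.1.2.
Proof.
move=> adm_c; have cV : c \in [set c | admissible c] by rewrite inE.
case: (M_blocks cV) => [[b bM [pcb le_kp]]|[b bM [qcb le_kq]]].
  by left; rewrite -pcb /u_M p_contract_in //= kp_p_share.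
by right; rewrite -qcb /v_M q_contract_in //= kq_q_share.
Qed.

Lemma flexible_blocked i j : ~~ in_calR G i j -> alpha G i j - e <= u_M i + v_M j.
Proof.
move=> flex; rewrite leNgt; apply/negP => gap.
(* The first price on the grid above u_i would be preferred by both p_i and q_j. *)
pose k := (Num.truncn (u_M i / e)).+1.
have [u_lt_ke ke_le] : u_M i < k%:R * e /\ k%:R * e <= u_M i + e.
  have /andP[lo hi] := truncn_itv (divr_ge0 (u_M_ge0 i) (ltW e_gt0)).
  rewrite -ltr_pdivrMr // hi; split=> //.
  by rewrite /k -addn1 natrD mulrDl mul1r lerD2r -ler_pdivlMr.
have ke_le_alpha : k%:R * e <= alpha G i j by have := v_M_ge0 j; lra.
have [[[i' j'] k'] [/= [-> ->] price_c adm_c]] := exists_flexible_contract ke_le_alpha.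
have := admissible_blocked adm_c; rewrite /p_share /q_share /= (negbTE flex) price_c.
by case; lra.
Qed.

Lemma eps_stable_of_contracts : eps_stable e mu_M u_M v_M.
Proof.
split.
- move=> i i' j /mu_MP[c cM c_ij] /mu_MP[c' c'M c'_ij].
  have cc' : c = c' by apply: M_q_inj; rewrite // c_ij c'_ij.
  by move: c_ij; rewrite cc' c'_ij => -[].
- exact: u_M_ge0.
- exact: v_M_ge0.
- by move=> i; rewrite ffunE /u_M; case: p_contract.
- move=> j unmatched; rewrite /v_M; case qj: (q_contract j) => [c|] //=.
  have [cM cj] := q_contractP qj.
  by have := unmatched c.1.1; rewrite ffunE p_contract_in //= cj eqxx.
- move=> i j /mu_MP[[[i' j'] k] cM [<- <-]] rig.
  by rewrite /u_M /v_M (p_contract_in cM) (q_contract_in cM) /p_share /q_share /= rig.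
- move=> i j /mu_MP[[[i' j'] k] cM [<- <-]] _.
  by rewrite /u_M /v_M (p_contract_in cM) (q_contract_in cM) p_share_add_q_share.
- move=> i j rig; have adm : admissible ((i, j), ord0) by rewrite /admissible /= rig.
  by have := admissible_blocked adm; rewrite /p_share /q_share /= rig.
- exact: flexible_blocked.
Qed.

End FromStableContracts.

Lemma exists_eps_stable :
  exists (mu : {ffun 'I_n -> option 'I_n}) u v, eps_stable e mu u v.
Proof.
have [kp kp_inj kp_p_share] := exists_rank_key p_share.
have [kq kq_inj kq_q_share] := exists_rank_key q_share.
have [M [sMV M_p_inj M_q_inj M_blocks]] := stable_contracts_exist
  (fun c : contract => c.1.1) (fun c : contract => c.1.2) [set c | admissible c] kp_inj kq_inj.
exists (mu_M M), (u_M M), (v_M M).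
exact: eps_stable_of_contracts kp_p_share kq_q_share sMV M_p_inj M_q_inj M_blocks.
Qed.

End EpsStableOutcome.

Section Encoding.

Definition p_var (i : 'I_n) : nat := i.+1.
Definition q_var (j : 'I_n) : nat := (n + j).+1.

Definition payoff_p (x : nat -> R) i := x (p_var i) - x 0%N.
Definition payoff_q (x : nat -> R) j := x 0%N - x (q_var j).

Definition u_ge i (c : R) := DCstr (p_var i) 0 c 0.
Definition u_le i (c : R) := DCstr 0 (p_var i) (- c) 0.
Definition v_ge j (c : R) := DCstr 0 (q_var j) c 0.
Definition v_le j (c : R) := DCstr (q_var j) 0 (- c) 0.
Definition uv_ge i j (c : R) k := DCstr (p_var i) (q_var j) c k.
Definition uv_le i j (c : R) := DCstr (q_var j) (p_var i) (- c) 0.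

Section ConstraintMeaning.
Variables (e : R) (x : nat -> R).

Lemma u_geE i c : dc_holds e x (u_ge i c) = (c <= payoff_p x i).
Proof. by rewrite /dc_holds /= mul0r subr0. Qed.

Lemma u_leE i c : dc_holds e x (u_le i c) = (payoff_p x i <= c).
Proof. by rewrite /dc_holds /= mul0r subr0 lerNl opprB. Qed.

Lemma v_geE j c : dc_holds e x (v_ge j c) = (c <= payoff_q x j).
Proof. by rewrite /dc_holds /= mul0r subr0. Qed.

Lemma v_leE j c : dc_holds e x (v_le j c) = (payoff_q x j <= c).
Proof. by rewrite /dc_holds /= mul0r subr0 lerNl opprB. Qed.

Lemma uv_geE i j c k :
  dc_holds e x (uv_ge i j c k) = (c - k%:R * e <= payoff_p x i + payoff_q x j).
Proof. by rewrite /dc_holds /payoff_p /payoff_q addrA subrK. Qed.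

Lemma uv_leE i j c : dc_holds e x (uv_le i j c) = (payoff_p x i + payoff_q x j <= c).
Proof. by rewrite /dc_holds /payoff_p /payoff_q /= mul0r subr0 lerNl opprB addrA subrK. Qed.

End ConstraintMeaning.

Definition cstrs_if (b : bool) (s : seq (dcstr R)) := if b then s else [::].

Lemma all_cstrs_if a b s : all a (cstrs_if b s) = b ==> all a s.
Proof. by case: b. Qed.

(* [d i j] records which member of a rigid pair (i, j) is content; only the
   blocking condition of a flexible pair carries the slack [e]. *)
Definition pair_cstrs (mu : 'I_n -> option 'I_n) (d : 'I_n -> 'I_n -> bool) i j :=
  [:: u_ge i 0; v_ge j 0] ++
  cstrs_if (mu i == None) [:: u_le i 0] ++
  cstrs_if [forall i', mu i' != Some j] [:: v_le j 0] ++
  cstrs_if (mu i == Some j)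
    (if in_calR G i j then
       [:: u_le i (beta G i j); u_ge i (beta G i j); v_le j (gamma G i j); v_ge j (gamma G i j)]
     else [:: uv_le i j (alpha G i j); uv_ge i j (alpha G i j) 0]) ++
  [:: if ~~ in_calR G i j then uv_ge i j (alpha G i j) 1
      else if d i j then u_ge i (beta G i j) else v_ge j (gamma G i j)].

Definition pair_conditions e mu (d : 'I_n -> 'I_n -> bool) (u v : 'I_n -> R) i j :=
  [&& 0 <= u i, 0 <= v j,
      (mu i == None) ==> (u i <= 0),
      [forall i', mu i' != Some j] ==> (v j <= 0),
      (mu i == Some j) ==>
        (if in_calR G i j then (u i == beta G i j) && (v j == gamma G i j)
         else u i + v j == alpha G i j) &
      (if ~~ in_calR G i j then alpha G i j - e <= u i + v j
       else if d i j then beta G i j <= u i else gamma G i j <= v j)].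

Lemma pair_cstrs_holds e x mu d i j :
  all (dc_holds e x) (pair_cstrs mu d i j) =
  pair_conditions e mu d (payoff_p x) (payoff_q x) i j.
Proof.
rewrite /pair_cstrs /pair_conditions !all_cat !all_cstrs_if /= !andbT -!andbA.
rewrite !(fun_if (dc_holds e x)) !(fun_if (all (dc_holds e x))) /=.
rewrite !(u_geE, u_leE, v_geE, v_leE, uv_geE, uv_leE) !eq_le !andbT -!andbA.
by rewrite mul0r mul1r subr0.
Qed.

Definition rifle_cstrs mu d :=
  flatten [seq pair_cstrs mu d p.1 p.2 | p <- enum {: 'I_n * 'I_n}].

Lemma rifle_cstrsP e x mu d :
  reflect (forall i j, pair_conditions e mu d (payoff_p x) (payoff_q x) i j)
          (all (dc_holds e x) (rifle_cstrs mu d)).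
Proof.
apply: (iffP allP) => [holds i j | cond c /flatten_mapP[[i j] _]].
  rewrite -pair_cstrs_holds; apply/allP => c c_ij; apply: holds.
  by apply/flatten_mapP; exists (i, j); rewrite ?mem_enum.
by apply/allP; rewrite pair_cstrs_holds.
Qed.

Lemma rifle_cstrs_below mu d : all (dc_vars_below (n + n).+1) (rifle_cstrs mu d).
Proof.
have p_lt i : (p_var i < (n + n).+1)%N by rewrite /p_var ltnS (leq_trans (ltn_ord i)) ?leq_addr.
have q_lt j : (q_var j < (n + n).+1)%N by rewrite /q_var ltnS -addnS leq_add2l.
apply/allP => c /flatten_mapP[[i j] _]; apply/allP; rewrite /pair_cstrs.
case: (mu i == None); case: [forall i', _]; case: (mu i == Some j); case: in_calR;
  case: (d i j); by rewrite /= /dc_vars_below /= ?p_lt ?q_lt.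
Qed.

Definition potential (u v : 'I_n -> R) : nat -> R :=
  nth 0 (0 :: [seq u i | i <- enum 'I_n] ++ [seq - v j | j <- enum 'I_n]).

Lemma payoff_p_potential u v : payoff_p (potential u v) =1 u.
Proof.
move=> i; rewrite /payoff_p /potential /= subr0 nth_cat size_map size_enum_ord ltn_ord.
by rewrite (nth_map i) ?nth_ord_enum // size_enum_ord.
Qed.

Lemma payoff_q_potential u v : payoff_q (potential u v) =1 v.
Proof.
move=> j; rewrite /payoff_q /potential /= nth_cat size_map size_enum_ord ltnNge leq_addr /=.
by rewrite addKn (nth_map j) ?nth_ord_enum ?size_enum_ord // sub0r opprK.
Qed.

Lemma eps_stable_rifle_cstrs e mu u v d : eps_stable e mu u v ->
  (forall i j, in_calR G i j -> if d i j then beta G i j <= u i else gamma G i j <= v j) ->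
  all (dc_holds e (potential u v)) (rifle_cstrs mu d).
Proof.
case=> _ u_ge0 v_ge0 u_unm v_unm rigid flexible _ flexible_block content.
apply/rifle_cstrsP => i j; rewrite /pair_conditions !payoff_p_potential !payoff_q_potential.
apply/and5P; split=> //.
- by apply/implyP => /eqP/u_unm ->.
- by apply/implyP => /forallP/v_unm ->.
apply/andP; split.
- apply/implyP => /eqP mu_ij; case: ifP => [rig|/negbT flx].
    by have [-> ->] := rigid _ _ mu_ij rig; rewrite !eqxx.
  by rewrite flexible.
- by case: ifP => [/flexible_block|/negbFE/content].
Qed.

Lemma rifle_cstrs_eps_stable e x mu d : is_matching mu -> all (dc_holds e x) (rifle_cstrs mu d) ->
  eps_stable e mu (payoff_p x) (payoff_q x).
Proof.
move=> mu_match /rifle_cstrsP cond; split=> //.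
- by move=> i; case/and5P: (cond i i).
- by move=> j; case/and5P: (cond j j).
- move=> i /eqP mu_i; case/and5P: (cond i i) => u_ge0 _ /implyP/(_ mu_i) u_le0 _ _.
  by apply: le_anti; rewrite u_ge0 u_le0.
- move=> j /forallP unm; case/and5P: (cond j j) => _ v_ge0 _ /implyP/(_ unm) v_le0 _.
  by apply: le_anti; rewrite v_ge0 v_le0.
- move=> i j /eqP mu_ij rig; case/and5P: (cond i j) => _ _ _ _ /andP[/implyP/(_ mu_ij) + _].
  by rewrite rig => /andP[/eqP-> /eqP->].
- move=> i j /eqP mu_ij flx; case/and5P: (cond i j) => _ _ _ _ /andP[/implyP/(_ mu_ij) + _].
  by rewrite (negbTE flx) => /eqP.
- move=> i j rig; case/and5P: (cond i j) => _ _ _ _ /andP[_]; rewrite rig /=.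
  by case: (d i j); [left | right].
- by move=> i j flx; case/and5P: (cond i j) => _ _ _ _ /andP[_]; rewrite flx.
Qed.

End Encoding.

End Game.

Theorem theorem1 (R : realType) (n : nat) (G : rifle_game R n) :
  nonneg_data G ->
  exists (u v : 'I_n -> R) (mu : 'I_n -> option 'I_n), stable G u v mu.
Proof.
move=> G_ge0.
pose solvable e (md : {ffun 'I_n -> option 'I_n} * {ffun 'I_n * 'I_n -> bool}) :=
  is_matching md.1 /\
  exists x, all (dc_holds e x) (rifle_cstrs G md.1 (fun i j => md.2 (i, j))).
have [[mu d] solv] : exists md, forall e, 0 < e -> solvable e md.
  apply: exists_uniform_witness => [e e' md le_ee' [md_match [x hx]]|e e_gt0].
    by split=> //; exists x; apply: sub_all hx => c; apply: dc_holds_mono.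
  have [mu [u [v es]]] := exists_eps_stable G_ge0 e_gt0.
  pose d := [ffun p : 'I_n * 'I_n => beta G p.1 p.2 <= u p.1].
  have content i j : in_calR G i j ->
      if d (i, j) then beta G i j <= u i else gamma G i j <= v j.
    by move/(es_rigid_block es); rewrite ffunE /=; case: ifP => // _ [].
  exists (mu, d); split; first exact: es_matching es.
  by exists (potential u v); apply: eps_stable_rifle_cstrs.
have [x hx] := dc_solvable_limit (rifle_cstrs_below G mu _) (fun e e_gt0 => (solv e e_gt0).2).
have [mu_match _] := solv 1 ltr01.
exists (payoff_p x), (payoff_q x), mu.
exact: eps_stable0_stable (rifle_cstrs_eps_stable mu_match hx).
Qed.
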